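(* Let $q\ge2$, let $0<R<1$ and let $l$ be an integer with $l>\frac{2}{1-R}$. Then there exist a sequence $n_i\to\infty$ and, for each $i$, a deterministic IDF code over $l$ blocks for $\Pi^q_{n_i}$ with $M_i\ge 2^{q^{R l n_i}}$ messages, type-I error probability $0$ and type-II error probability $\lambda_{2,i}$, such that $\lambda_{2,i}\to0$.
   Context: Fix an integer $q\ge 2$, $\mathcal A_q=\{1,\dots,q\}$. For $n\ge1$ and $\sigma\in S_n$, $\sigma\mathbf x=(x_{\sigma^{-1}(1)},\dots,x_{\sigma^{-1}(n)})$ for $\mathbf x\in\mathcal A_q^n$; the $n$-block $q$-ary uniform permutation channel $\Pi^q_n$ has input/output alphabet $\mathcal A_q^n$ and $\Pi^q_n(\mathbf y\mid\mathbf x)=\frac1{n!}\sum_{\sigma\in S_n}\mathbf 1\{\mathbf y=\sigma\mathbf x\}$. An identification-feedback (IDF) code over $l$ blocks with $M$ messages for $\Pi^q_n$ (with block-wise noiseless feedback) is a family $\{(\mathbb Q_{i,1},\dots,\mathbb Q_{i,l},\mathcal D_i)\}_{i=1}^M$ where $\mathbb Q_{i,j}(\mathbf x^{(j)}\mid \mathbf y^{(1)},\dots,\mathbf y^{(j-1)},\mathbf x^{(1)},\dots,\mathbf x^{(j-1)})$ is a conditional probability distribution on $\mathcal A_q^n$ given the previous output blocks (fed back) and previous input blocks, and $\mathcal D_i\subseteq(\mathcal A_q^n)^l$. When message $i$ is sent, the blocks have joint law $\mathbb P^{(i)}(\underline{\mathbf x},\underline{\mathbf y})=\prod_{j=1}^l\mathbb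 Q_{i,j}(\mathbf x^{(j)}\mid\mathbf y^{(1)},\dots,\mathbf y^{(j-1)},\mathbf x^{(1)},\dots,\mathbf x^{(j-1)})\,\Pi^q_n(\mathbf y^{(j)}\mid\mathbf x^{(j)})$. The code is deterministic if each $\mathbb Q_{i,j}$ is a point mass given by a function $\mathbf f_{i,j}$ of the past blocks. Error probabilities: $\lambda_{i\to j}=\mathbb P^{(i)}(\underline{\mathbf y}\in\mathcal D_j)$ for $i\ne j$, $\lambda_{i\not\to i}=\mathbb P^{(i)}(\underline{\mathbf y}\notin\mathcal D_i)$, type-I error $\lambda_1=\max_i\lambda_{i\not\to i}$, type-II error $\lambda_2=\max_{i\neq j}\lambda_{i\to j}$. *)

From HB Require Import structures.
From mathcomp Require Import all_boot all_order all_algebra all_fingroup.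
From mathcomp Require Import all_classical all_reals all_analysis.
Set Implicit Arguments. Unset Strict Implicit. Unset Printing Implicit Defensive.
Import Order.TTheory GRing.Theory Num.Theory.
Local Open Scope ring_scope.

(* A block: a word of length n over the q-ary alphabet, encoded as 'I_q
   (= {0,...,q-1}, a relabelling of {1,...,q}). *)
Definition word (q n : nat) := {ffun 'I_n -> 'I_q}.

Definition permw (q n : nat) (s : 'S_n) (x : word q n) : word q n :=
  [ffun k => x (s^-1%g k)].

Definition Pichan (R : realType) (q n : nat) (y x : word q n) : R :=
  (#|[set s : 'S_n | y == permw s x]|)%:R / (n`!)%:R.

(* Deterministic IDF code over l blocks with M messages for Pi^q_n, with
   block-wise noiseless feedback.  enc i j ys xs is the input block j (0-based)
   for message i, as a function of the previous output blocks ys and previous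
   input blocks xs (the lists of the first j blocks).  dec i is the decoding
   set D_i of output sequences. *)
Record detIDF (q n l M : nat) := DetIDF {
  enc : 'I_M -> nat -> seq (word q n) -> seq (word q n) -> word q n ;
  dec : 'I_M -> {set {ffun 'I_l -> word q n}}
}.

Definition blocks (q n l : nat) := {ffun 'I_l -> word q n}.

Definition fseq (q n l : nat) (v : blocks q n l) : seq (word q n) :=
  [seq v j | j <- enum 'I_l].

Definition jointP (R : realType) (q n l M : nat) (C : detIDF q n l M)
  (i : 'I_M) (xs ys : blocks q n l) : R :=
  \prod_(j < l)
    ((xs j == enc C i j (take j (fseq ys)) (take j (fseq xs)))%:R
       * Pichan R (ys j) (xs j)).

Definition probD (R : realType) (q n l M : nat) (C : detIDF q n l M)
  (i : 'I_M) (D : {set blocks q n l}) : R :=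
  \sum_(xs : blocks q n l) \sum_(ys in D) jointP R C i xs ys.

Definition lam_to (R : realType) (q n l M : nat) (C : detIDF q n l M)
  (i j : 'I_M) : R := probD R C i (dec C j).

Definition lam_notto (R : realType) (q n l M : nat) (C : detIDF q n l M)
  (i : 'I_M) : R := probD R C i (~: dec C i).

Definition lambda1 (R : realType) (q n l M : nat) (C : detIDF q n l M) : R :=
  \big[Num.max/0]_(i : 'I_M) lam_notto R C i.

Definition lambda2 (R : realType) (q n l M : nat) (C : detIDF q n l M) : R :=
  \big[Num.max/0]_(p : 'I_M * 'I_M | p.1 != p.2) lam_to R C p.1 p.2.

(* The first l - 1 blocks generate common randomness: the sender
   transmits each time a fixed word x0 with a largest permutation orbit (of
   size at least q^n / (n + 1)^q), and the fed-back outputs form a key that is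
   uniform on the l - 1 fold power of that orbit, a set of size
   K >= q^(n (l - 2)) once n = 2^j is large.  A message i is a function g_i
   from keys to {0, ..., n}, and the last block carries g_i(key) as a number of
   ones.  The channel only permutes symbols, so the decoder of i, which compares
   the number of received ones with g_i(key), never misses; a wrong j is
   accepted only when g_i and g_j agree on the key, which happens with
   probability at most a / K if the functions pairwise agree on at most a
   keys.  A greedy (Gilbert-Varshamov) code has 2^K such functions for
   a = 2 K / j, giving M >= 2^K >= 2^(q^(r l n)) and type-II error <= 2 / j. *)

From HB Require Import structures.
From mathcomp Require Import all_boot all_order all_algebra all_fingroup.
From mathcomp Require Import all_classical all_reals all_analysis.
From mathcomp Require Import zify lra.
Import Order.TTheory GRing.Theory Num.Theory.

Set Implicit Arguments. Unset Strict Implicit. Unset Printing Implicit Defensive.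

Section AgreementCodes.
Variables X T : finType.
Implicit Types (f g : {ffun X -> T}) (A : {set X}) (F : {set {ffun X -> T}}).

Definition agree f g : {set X} := [set x | f x == g x].

Lemma agreeC f g : agree f g = agree g f.
Proof. by apply/setP => x; rewrite !inE eq_sym. Qed.

Lemma agreexx f : agree f f = [set: X].
Proof. by apply/setP => x; rewrite !inE eqxx. Qed.

Lemma card_agree_eq f A : #|[set g | agree f g == A]| <= #|T| ^ (#|X| - #|A|).
Proof.
pose restr g := [ffun y : {x | x \notin A} => g (val y)].
have -> : #|X| - #|A| = #|[pred x | x \notin A]|.
  by rewrite -(cardsC A) addKn; apply: eq_card => x; rewrite !inE.
rewrite -card_sig -card_ffun; apply: (@leq_card_in _ _ restr) => g1 g2.
rewrite !inE => /eqP agree1 /eqP agree2 /ffunP restr12.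
apply/ffunP => x; have [xA | xNA] := boolP (x \in A).
  by move: (xA) (xA); rewrite -{1}agree1 -agree2 !inE => /eqP <- /eqP.
by have := restr12 (exist _ x xNA); rewrite !ffunE.
Qed.

Lemma card_agree_gt f a : 0 < #|T| ->
  #|[set g | a < #|agree f g|]| <= 2 ^ #|X| * #|T| ^ (#|X| - a.+1).
Proof.
move=> T_gt0; rewrite -sum1_card.
rewrite (partition_big (agree f) (fun A : {set X} => a < #|A|)) => [|g]; last by rewrite inE.
apply: (@leq_trans (\sum_(A : {set X}) #|T| ^ (#|X| - a.+1))); last first.
  have card_sets : #|{set X}| = 2 ^ #|X|.
    by rewrite -(cardsT X) -card_powerset powersetT cardsT.
  by rewrite sum_nat_const card_sets.
rewrite [leqRHS](bigID (fun A : {set X} => a < #|A|)) /=; apply: leq_trans (leq_addr _ _).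
apply: leq_sum => A a_lt_A; apply: (@leq_trans #|[set g | agree f g == A]|).
  rewrite -sum1_card; apply/eq_leq/eq_bigl => g.
  by rewrite !inE; case: eqP => [-> | _]; rewrite ?a_lt_A ?andbF.
by apply: leq_trans (card_agree_eq f A) _; rewrite leq_pexp2l // leq_sub2l.
Qed.

Definition low_agreement a F :=
  [forall f in F, forall g in F, (f != g) ==> (#|agree f g| <= a)].

Lemma low_agreementP a F :
  reflect {in F &, forall f g, f != g -> #|agree f g| <= a} (low_agreement a F).
Proof.
apply: (iffP forall_inP) => [lowF f g fF gF | lowF f fF].
  exact/implyP/(forall_inP (lowF f fF)).
by apply/forall_inP => g gF; apply/implyP; apply: lowF.
Qed.

Lemma maximal_low_agreement_cover a F : a < #|X| -> low_agreement a F ->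
    (forall F', low_agreement a F' -> #|F'| <= #|F|) ->
  forall g, exists2 f, f \in F & a < #|agree f g|.
Proof.
move=> a_lt_X /low_agreementP lowF maxF g.
have [gF | gNF] := boolP (g \in F); first by exists g; rewrite // agreexx cardsT.
apply/exists_inP; apply: contraT; rewrite negb_exists_in => /forall_inP farF.
suff /maxF : low_agreement a (g |: F) by rewrite cardsU1 gNF ltnn.
apply/low_agreementP => f1 g1; rewrite !in_setU1.
have far h : h \in F -> #|agree h g| <= a by rewrite leqNgt => /farF.
case/predU1P=> [-> | f1F] /predU1P[-> | g1F] f1g1.
- by rewrite eqxx in f1g1.
- by rewrite agreeC far.
- by rewrite far.
- exact: lowF.
Qed.

Lemma exists_low_agreement_code a : a < #|X| -> 0 < #|T| ->
  exists F, {in F &, forall f g, f != g -> #|agree f g| <= a} /\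
    #|T| ^ #|X| <= #|F| * (2 ^ #|X| * #|T| ^ (#|X| - a.+1)).
Proof.
move=> a_lt_X T_gt0.
have low0 : low_agreement a finset.set0 by apply/forall_inP => f; rewrite inE.
have [F lowF maxF] := @arg_maxnP _ finset.set0 (low_agreement a) (fun F => #|F|) low0.
exists F; split; first exact/low_agreementP.
have cover := maximal_low_agreement_cover a_lt_X lowF maxF.
rewrite -card_ffun -[#|{ffun X -> T}|]sum1_card.
apply: (@leq_trans (\sum_h \sum_(f in F) (a < #|agree f h|))).
  by apply: leq_sum => h _; have [f fF fh] := cover h; rewrite (bigD1 f) //= fh.
rewrite exchange_big /= -sum_nat_const; apply: leq_sum => f _.
apply: leq_trans (card_agree_gt f a T_gt0); rewrite -sum1_card [leqRHS]big_mkcond /=.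
by apply/eq_leq/eq_bigr => h _; rewrite inE; case: ifP.
Qed.

End AgreementCodes.

Section PermutationChannel.
Variables q n : nat.
Local Notation word := (word q n).
Implicit Types (x y : word) (s t : 'S_n).

Lemma permwM s t x : permw s (permw t x) = permw (t * s)%g x.
Proof. by apply/ffunP => k; rewrite !ffunE invMg permM. Qed.

Lemma permw1 x : permw 1%g x = x.
Proof. by apply/ffunP => k; rewrite !ffunE invg1 perm1. Qed.

Definition perm_count x y := #|[set s | y == permw s x]|.

Definition perm_orbit x := [set permw s x | s : 'S_n].

Lemma sum_perm_count x : \sum_y perm_count x y = n`!.
Proof.
rewrite -card_Sn -sum1_card (partition_big (fun s => permw s x) xpredT) //.
apply: eq_bigr => y _; rewrite sum1dep_card cardsE.
by apply: eq_card => s; rewrite /= inE eq_sym.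
Qed.

Lemma perm_count_orbit x y : y \in perm_orbit x -> perm_count x y = perm_count x x.
Proof.
case/imsetP => t _ ->; rewrite /perm_count -[RHS](card_rcoset _ t).
apply: eq_card => s; rewrite mem_rcoset !inE -permwM.
apply/eqP/eqP => [<- | E]; first by rewrite permwM mulgV permw1.
by rewrite {1}E permwM mulVg permw1.
Qed.

Lemma perm_count_notin x y : y \notin perm_orbit x -> perm_count x y = 0.
Proof.
move=> yNx; apply/eqP; rewrite cards_eq0; apply/eqP/setP => s; rewrite !inE.
by apply: contraNF yNx => /eqP ->; apply: imset_f.
Qed.

Lemma perm_count_gt0 x : 0 < perm_count x x.
Proof. by apply/card_gt0P; exists 1%g; rewrite inE permw1. Qed.

Lemma card_perm_orbit x : #|perm_orbit x| * perm_count x x = n`!.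
Proof.
rewrite -(sum_perm_count x) (bigID (mem (perm_orbit x))) /=.
rewrite [X in _ + X]big1 ?addn0 => [|y /perm_count_notin //].
by rewrite -sum_nat_const; apply: eq_bigr => y /perm_count_orbit.
Qed.

(* [inord] loses nothing: a letter occurs at most n times in a word. *)
Definition letter_counts x : {ffun 'I_q -> 'I_n.+1} :=
  [ffun c => inord (count_mem c (codom x))].

Lemma letter_counts_orbit x y : letter_counts x = letter_counts y -> y \in perm_orbit x.
Proof.
move=> xy.
have count_xy c : count_mem c (codom x) = count_mem c (codom y).
  have count_le (z : word) : count_mem c (codom z) <= n.
    by apply: leq_trans (count_size _ _) _; rewrite size_codom card_ord.
  have /(congr1 val) := congr1 (fun f : {ffun 'I_q -> 'I_n.+1} => f c) xy.
  by rewrite !ffunE /= !inordK ?ltnS.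
have : perm_eq (codom y) [tuple x i | i < n].
  have -> : tval [tuple x i | i < n] = codom x by rewrite codomE -val_ord_tuple.
  by apply/allP => c _; rewrite /= -count_xy eqxx.
case/tuple_permP => p yp; apply/imsetP; exists p^-1%g => //.
apply/ffunP => k; rewrite ffunE invgK.
have : map y (enum 'I_n) = map (x \o p) (enum 'I_n).
  rewrite -codomE yp /= -val_ord_tuple.
  by apply: eq_map => i; rewrite tnth_mktuple.
by move/eq_in_map/(_ k); rewrite mem_enum; apply.
Qed.

Lemma exists_large_orbit : 0 < q -> exists x0, q ^ n <= #|perm_orbit x0| * n.+1 ^ q.
Proof.
move=> q_gt0; pose type_size ty := #|[set x | letter_counts x == ty]|.
have [ty0 _ ty0_max] :=
  @arg_maxnP _ (letter_counts [ffun=> Ordinal q_gt0]) xpredT type_size isT.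
have words_le : q ^ n <= n.+1 ^ q * type_size ty0.
  have -> : q ^ n = \sum_ty type_size ty.
    rewrite -[in LHS](card_ord q) -[in LHS](card_ord n) -card_ffun -sum1_card.
    rewrite (partition_big letter_counts xpredT) //.
    by apply: eq_bigr => ty _; rewrite sum1dep_card /type_size cardsE.
  apply: (@leq_trans (\sum_(ty : {ffun 'I_q -> 'I_n.+1}) type_size ty0)).
    by apply: leq_sum => ty _; apply: ty0_max.
  by rewrite sum_nat_const card_ffun !card_ord.
have : 0 < type_size ty0.
  by rewrite lt0n; apply: contraTneq words_le => ->; rewrite muln0 -ltnNge expn_gt0 q_gt0.
case/card_gt0P => x0; rewrite inE => /eqP x0ty0.
exists x0; rewrite mulnC; apply: leq_trans words_le _; rewrite leq_mul2l.
apply/orP; right; apply/subset_leq_card/fintype.subsetP => x.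
by rewrite inE => /eqP xty0; apply: letter_counts_orbit; rewrite xty0 x0ty0.
Qed.

Variable R : realType.
Local Open Scope ring_scope.

Lemma Pichan_ge0 y x : 0 <= Pichan R y x.
Proof. by rewrite divr_ge0 ?ler0n. Qed.

Lemma PichanE y x : Pichan R y x = (y \in perm_orbit x)%:R / #|perm_orbit x|%:R.
Proof.
rewrite /Pichan -/(perm_count x y) -(card_perm_orbit x).
have [yx | yNx] := boolP (y \in perm_orbit x); last by rewrite perm_count_notin // !mul0r.
have count_neq0 : (perm_count x x)%:R != 0 :> R by rewrite pnatr_eq0 -lt0n perm_count_gt0.
by rewrite perm_count_orbit // natrM invfM mulrCA mulfV // mulr1 mul1r.
Qed.

Lemma sum_Pichan x : \sum_y Pichan R y x = 1.
Proof. by rewrite -mulr_suml -natr_sum (eq_bigr (perm_count x)) // sum_perm_count mulfV. Qed.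

End PermutationChannel.

Section OnesCount.
Variables (q n : nat) (q_gt1 : 1 < q).
Local Notation word := (word q n).

Definition letter1 : 'I_q := Ordinal q_gt1.
Definition letter0 : 'I_q := Ordinal (ltnW q_gt1).

Definition ones (y : word) := #|[set k | y k == letter1]|.

Definition weight_word (t : 'I_n.+1) : word :=
  [ffun k : 'I_n => if k < t then letter1 else letter0].

Lemma ones_weight_word t : ones (weight_word t) = t.
Proof.
have t_le_n : t <= n by rewrite -ltnS.
rewrite /ones (_ : [set k | _] = widen_ord t_le_n @: [set: 'I_t]).
  by rewrite card_imset ?cardsT ?card_ord // => a b /(congr1 val) /= /val_inj.
apply/setP => k; rewrite !inE ffunE; apply/idP/imsetP => [|[k' _ ->]].
  case: ifP => [k_lt_t _ | _ /eqP/(congr1 val) //].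
  by exists (Ordinal k_lt_t); [rewrite inE | apply: val_inj].
by rewrite (ltn_ord k').
Qed.

Lemma ones_permw s (y : word) : ones (permw s y) = ones y.
Proof.
rewrite /ones -[RHS](card_preimset _ (@perm_inj _ s^-1%g)).
by apply: eq_card => k; rewrite !inE ffunE.
Qed.

Lemma Pichan_ones (R : realType) (y x : word) : ones y != ones x -> Pichan R y x = 0%R.
Proof.
move=> yx; rewrite /Pichan (_ : [set s | _] = finset.set0) ?cards0 ?mul0r //.
by apply/setP => s; rewrite !inE; apply: contraNF yx => /eqP ->; rewrite ones_permw.
Qed.

End OnesCount.

Section DeterministicIDF.
Local Open Scope ring_scope.
Variables (R : realType) (q n l M : nat) (C : detIDF q n l M).

Lemma probD_ge0 i D : 0 <= probD R C i D.
Proof.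
apply: sumr_ge0 => xs _; apply: sumr_ge0 => ys _; apply: prodr_ge0 => j _.
by rewrite mulr_ge0 ?ler0n ?Pichan_ge0.
Qed.

Lemma lambda1_eq0 : (forall i, lam_notto R C i = 0) -> lambda1 R C = 0.
Proof.
by move=> lam0; apply: (big_ind (fun x : R => x = 0)) => // x y -> ->; rewrite maxxx.
Qed.

Lemma lambda2_ge0 : 0 <= lambda2 R C.
Proof.
apply: (big_ind (fun x : R => 0 <= x)) => // [x y x_ge0 _|p _].
  by rewrite le_max x_ge0.
exact: probD_ge0.
Qed.

Lemma lambda2_le b : 0 <= b -> (forall i j, i != j -> lam_to R C i j <= b) ->
  lambda2 R C <= b.
Proof.
move=> b_ge0 lam_le; apply: (big_ind (fun x : R => x <= b)) => // [x y|p].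
  by rewrite ge_max => -> ->.
exact: lam_le.
Qed.

Lemma probD_input_oblivious i D :
    (forall j ys xs, enc C i j ys xs = enc C i j ys [::]) ->
  probD R C i D =
    \sum_(ys in D) \prod_(j < l) Pichan R (ys j) (enc C i j (take j (fseq ys)) [::]).
Proof.
move=> enc_xs; rewrite /probD exchange_big /=; apply: eq_bigr => ys _.
set e := fun j : 'I_l => enc C i j (take j (fseq ys)) [::].
rewrite (eq_bigr (fun xs : blocks q n l =>
    \prod_j ((xs j == e j)%:R * Pichan R (ys j) (xs j)))); last first.
  by move=> xs _; apply: eq_bigr => j _; rewrite enc_xs.
rewrite -(bigA_distr_bigA (fun j x => (x == e j)%:R * Pichan R (ys j) x)).
apply: eq_bigr => j _; rewrite (bigD1 (e j)) //= eqxx mul1r big1 ?addr0 //.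
by move=> x /negbTE ->; rewrite mul0r.
Qed.

End DeterministicIDF.

Section LastBlock.
Variables (T : finType) (L : nat).
Implicit Types (ys : {ffun 'I_L.+1 -> T}) (u : {ffun 'I_L -> T}).

Definition ffun_belast ys : {ffun 'I_L -> T} := [ffun k => ys (lift ord_max k)].

Definition ffun_rcons u y : {ffun 'I_L.+1 -> T} :=
  [ffun k => oapp u y (unlift ord_max k)].

Lemma ffun_rconsK u y : ffun_belast (ffun_rcons u y) = u.
Proof. by apply/ffunP => k; rewrite !ffunE liftK. Qed.

Lemma ffun_rcons_last u y : ffun_rcons u y ord_max = y.
Proof. by rewrite ffunE unlift_none. Qed.

Lemma ffun_rcons_widen u y k : ffun_rcons u y (widen_ord (leqnSn L) k) = u k.
Proof.
rewrite -(_ : lift ord_max k = widen_ord _ k) ?ffunE ?liftK //.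
by apply: val_inj; exact: lift_max.
Qed.

Lemma ffun_belastK ys : ffun_rcons (ffun_belast ys) (ys ord_max) = ys.
Proof.
by apply/ffunP => k; rewrite !ffunE; case: unliftP => [j ->|->] //=; rewrite ffunE.
Qed.

Lemma sum_ffun_rcons (V : nmodType) (F : {ffun 'I_L.+1 -> T} -> V) :
  (\sum_ys F ys = \sum_u \sum_y F (ffun_rcons u y))%R.
Proof.
rewrite pair_bigA (reindex (fun p => ffun_rcons p.1 p.2)) //=.
exists (fun ys => (ffun_belast ys, ys ord_max)) => [[u y] _ | ys _] /=.
  by rewrite ffun_rconsK ffun_rcons_last.
by rewrite ffun_belastK.
Qed.

End LastBlock.

Section OrbitCode.
Variables (q n L : nat) (q_gt1 : 1 < q) (x0 : word q n) (M : nat).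
Local Notation word := (word q n).
Local Notation key := {u : {ffun 'I_L -> word} | u \in ffun_on (perm_orbit x0)}.
Variable g : 'I_M -> {ffun key -> 'I_n.+1}.

(* Sequences outside the key space have probability 0; they get the junk tag
   ord0. *)
Definition key_tag (i : 'I_M) (u : {ffun 'I_L -> word}) : 'I_n.+1 :=
  oapp (g i) ord0 (insub u).

Definition orbit_enc (i : 'I_M) (j : nat) (ys _ : seq word) : word :=
  if j < L then x0 else weight_word q_gt1 (key_tag i [ffun k : 'I_L => nth x0 ys k]).

Definition orbit_dec (i : 'I_M) : {set blocks q n L.+1} :=
  [set ys : blocks q n L.+1 | ones q_gt1 (ys ord_max) == key_tag i (ffun_belast ys)].

Definition orbit_code : detIDF q n L.+1 M := DetIDF orbit_enc orbit_dec.

Lemma card_key : #|{: key}| = #|perm_orbit x0| ^ L.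
Proof.
rewrite card_sig -[in RHS](card_ord L) -card_ffun_on.
by apply: eq_card => u; rewrite inE.
Qed.

Lemma card_key_collisions i j :
  #|[set u | (u \in ffun_on (perm_orbit x0)) && (key_tag i u == key_tag j u)]| =
  #|agree (g i) (g j)|.
Proof.
rewrite -(card_imset _ val_inj); apply: eq_card => u; rewrite inE.
apply/idP/imsetP => [/andP[uK ij] | [v]].
  by exists (Sub u uK); rewrite // inE /key_tag insubT in ij *.
by rewrite inE => ij ->; rewrite (valP v) /key_tag valK.
Qed.

Variable R : realType.
Local Open Scope ring_scope.

Definition key_prob (u : {ffun 'I_L -> word}) := \prod_(k < L) Pichan R (u k) x0.

Lemma key_probE u : key_prob u =
  if u \in ffun_on (perm_orbit x0) then (#|perm_orbit x0|%:R^-1) ^+ L else 0.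
Proof.
rewrite /key_prob; case: (pickP (fun k => u k \notin perm_orbit x0)) => [k uNk | uK].
  rewrite (bigD1 k) //= PichanE (negbTE uNk) !mul0r.
  by case: ifP => // /ffun_onP/(_ k) ukK; rewrite ukK in uNk.
have -> : u \in ffun_on (perm_orbit x0) by apply/ffun_onP => k; apply/negbFE/uK.
rewrite -[in RHS](card_ord L) -prodr_const; apply: eq_bigr => k _.
by rewrite PichanE (negbFE (uK k)) mul1r.
Qed.

Lemma probD_orbit_code i D : probD R orbit_code i D =
  \sum_u \sum_y (ffun_rcons u y \in D)%:R *
    (key_prob u * Pichan R y (weight_word q_gt1 (key_tag i u))).
Proof.
rewrite probD_input_oblivious // big_mkcond /= sum_ffun_rcons.
apply: eq_bigr => u _; apply: eq_bigr => y _.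
rewrite big_ord_recr /= {2}/orbit_enc ltnn ffun_rcons_last.
rewrite (eq_bigr (fun k => Pichan R (u k) x0)) => [|k _]; last first.
  by rewrite ffun_rcons_widen /orbit_enc /= ltn_ord.
have -> : [ffun k : 'I_L => nth x0 (take L (fseq (ffun_rcons u y))) k] = u.
  apply/ffunP => k; have k_lt : (k < L.+1)%N := leqW (ltn_ord k).
  rewrite ffunE nth_take // (nth_map ord0) ?size_enum_ord //.
  rewrite (_ : nth _ _ _ = widen_ord (leqnSn L) k) ?ffun_rcons_widen //.
  by apply: val_inj; rewrite /= nth_enum_ord.
by case: (_ \in D); rewrite ?mul1r ?mul0r.
Qed.

Lemma lambda1_orbit_code : lambda1 R orbit_code = 0.
Proof.
apply: lambda1_eq0 => i; rewrite /lam_notto probD_orbit_code.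
apply: big1 => u _; apply: big1 => y _; rewrite !inE ffun_rconsK ffun_rcons_last.
have [_ | y_tag] := eqVneq (ones q_gt1 y) (key_tag i u); first by rewrite mul0r.
by rewrite Pichan_ones ?mulr0 // ones_weight_word.
Qed.

Lemma lam_to_orbit_code i j :
  lam_to R orbit_code i j <= #|agree (g i) (g j)|%:R / #|{: key}|%:R.
Proof.
rewrite /lam_to probD_orbit_code.
apply: (@le_trans _ _ (\sum_u \sum_y (key_tag i u == key_tag j u)%:R *
    (key_prob u * Pichan R y (weight_word q_gt1 (key_tag i u))))).
  apply: ler_sum => u _; apply: ler_sum => y _; rewrite inE ffun_rconsK ffun_rcons_last.
  have key_ge0 : 0 <= key_prob u by apply: prodr_ge0 => k _; apply: Pichan_ge0.
  have [y_tag | _] := eqVneq (ones q_gt1 y) (key_tag j u); last first.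
    by rewrite mul0r mulr_ge0 ?ler0n ?mulr_ge0 ?Pichan_ge0.
  have [-> | ij] := eqVneq (key_tag i u) (key_tag j u); first exact: lexx.
  rewrite Pichan_ones ?mulr0 ?mul0r // ones_weight_word y_tag.
  by apply: contra ij => /eqP/val_inj ->; rewrite eqxx.
under eq_bigr => u _ do rewrite -mulr_sumr -mulr_sumr sum_Pichan mulr1.
rewrite (eq_bigr (fun u => if (u \in ffun_on (perm_orbit x0)) && (key_tag i u == key_tag j u)
   then (#|perm_orbit x0|%:R^-1) ^+ L else 0)); last first.
  by move=> u _; rewrite key_probE; case: (_ \in _); case: (_ == _); rewrite ?mul1r ?mul0r ?mulr0.
by rewrite -big_mkcond sumr_const -card_key_collisions cardsE card_key natrX -exprVn mulr_natl.
Qed.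

Lemma lambda2_orbit_code a : (forall i j, i != j -> #|agree (g i) (g j)| <= a)%N ->
  lambda2 R orbit_code <= a%:R / #|{: key}|%:R.
Proof.
move=> low; apply: lambda2_le => [|i j ij]; first by rewrite divr_ge0 ?ler0n.
apply: le_trans (lam_to_orbit_code i j) _.
by rewrite ler_wpM2r ?invr_ge0 ?ler0n ?ler_nat ?low.
Qed.

End OrbitCode.

Lemma sqrn_leq_exp2 j : 4 <= j -> j * j <= 2 ^ j.
Proof.
move=> j_ge4; rewrite -(subnK j_ge4); elim: (j - 4) => [|k IHk] //.
by rewrite addSn expnS; nia.
Qed.

Lemma exp_succ_exp2_leq c j : c + 4 <= j -> (2 ^ j).+1 ^ c <= 2 ^ 2 ^ j.
Proof.
move=> j_large; have jc_le : j.+1 * c <= 2 ^ j.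
  by have := @sqrn_leq_exp2 j (leq_trans (leq_addl c 4) j_large); nia.
apply: (@leq_trans ((2 ^ j.+1) ^ c)); last by rewrite -expnM leq_exp2l.
case: c {j_large jc_le} => [|c] //; rewrite leq_exp2r // expnS.
have : 0 < 2 ^ j by rewrite expn_gt0.
lia.
Qed.

Lemma key_count_lower q n L o : 0 < L -> q ^ n <= o * n.+1 ^ q ->
  n.+1 ^ (q * L) <= q ^ n -> q ^ (n * L.-1) <= o ^ L.
Proof.
move=> L_gt0 orbit_large types_small.
have qn_gt0 : 0 < q ^ n by apply: leq_trans types_small; rewrite expn_gt0.
rewrite -(leq_pmul2r qn_gt0) -expnD -mulnSr prednK // expnM.
apply: (@leq_trans ((o * n.+1 ^ q) ^ L)); first by rewrite leq_exp2r.
by rewrite expnMn -expnM leq_mul2l types_small orbT.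
Qed.

Lemma code_size_lower N K a j F : a < K -> 2 * K < a.+1 * j -> 2 ^ j <= N ->
  N.+1 ^ K <= F * (2 ^ K * N.+1 ^ (K - a.+1)) -> 2 ^ K <= F.
Proof.
move=> a_lt_K aj_large N_large.
rewrite -{1}(subnKC a_lt_K) expnD mulnA leq_pmul2r ?expn_gt0 // => code_large.
rewrite -(@leq_pmul2r (2 ^ K)) ?expn_gt0 //; apply: leq_trans code_large.
rewrite -expnD addnn -mul2n; apply: (@leq_trans (2 ^ (j * a.+1))).
  by rewrite leq_exp2l // [j * _]mulnC; apply: ltnW.
by rewrite expnM leq_exp2r // leqW.
Qed.

Local Open Scope ring_scope.

Lemma orbit_code_exists (R : realType) q L j :
  (1 < q)%N -> (0 < L)%N -> (q * L + 4 <= j)%N ->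
  exists C : {M : nat & detIDF q (2 ^ j) L.+1 M},
    [/\ (2 ^ q ^ (2 ^ j * L.-1) <= projT1 C)%N, lambda1 R (projT2 C) = 0
      & lambda2 R (projT2 C) <= 2 / j%:R].
Proof.
move=> q_gt1 L_gt0 j_large; set n := (2 ^ j)%N.
have [x0 orbit_large] := exists_large_orbit n (ltnW q_gt1).
set K := #|{: {u : {ffun 'I_L -> word q n} | u \in ffun_on (perm_orbit x0)}}|.
have K_large : (q ^ (n * L.-1) <= K)%N.
  rewrite /K card_key; apply: key_count_lower orbit_large _ => //.
  by apply: leq_trans (exp_succ_exp2_leq j_large) _; rewrite leq_exp2r ?expn_gt0.
have K_gt0 : (0 < K)%N by apply: leq_trans K_large; rewrite expn_gt0 ltnW.
have j_gt0 : (0 < j)%N by apply: leq_trans j_large; rewrite addn4.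
pose a := (2 * K %/ j)%N.
have aj_le : (a * j <= 2 * K)%N := leq_divM _ _.
have a_lt_K : (a < K)%N by move: j_large aj_le; nia.
have T_gt0 : (0 < #|'I_n.+1|)%N by rewrite card_ord.
have [F [lowF F_large]] := exists_low_agreement_code a_lt_K T_gt0.
exists (existT _ #|F| (orbit_code q_gt1 (fun i : 'I_#|F| => enum_val i))).
split => /=.
- apply: (@leq_trans (2 ^ K)); first by rewrite leq_exp2l.
  apply: code_size_lower a_lt_K _ (leqnn n) _; first exact: ltn_ceil.
  by rewrite card_ord in F_large.
- exact: lambda1_orbit_code.
- have low (i k : 'I_#|F|) : i != k -> (#|agree (enum_val i) (enum_val k)| <= a)%N.
    by move=> ik; apply: lowF; rewrite ?enum_valP // (inj_eq enum_val_inj).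
  apply: le_trans (lambda2_orbit_code q_gt1 R low) _.
  rewrite ler_pdivrMr ?ltr0n // mulrAC ler_pdivlMr ?ltr0n //.
  by rewrite -!natrM ler_nat.
Qed.

Lemma rate_slack (R : realType) (r : R) (l : nat) :
  0 < r -> r < 1 -> 2 / (1 - r) < l%:R -> (2 < l)%N /\ r * l%:R <= (l - 2)%:R.
Proof.
move=> r_gt0 r_lt1; rewrite ltr_pdivrMr ?subr_gt0 // => l_large.
have rl_ge0 : 0 <= r * l%:R := mulr_ge0 (ltW r_gt0) (ler0n _ _).
have l_gt2 : (2 < l)%N by rewrite -(ltr_nat R); lra.
by split => //; rewrite natrB ?(ltnW l_gt2) //; lra.
Qed.

Lemma powR_double_exp_le (R : realType) (q m M : nat) (e : R) :
  (0 < q)%N -> e <= m%:R -> (2 ^ q ^ m <= M)%N -> 2%:R `^ (q%:R `^ e) <= M%:R.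
Proof.
move=> q_gt0 e_le M_large; apply: (@le_trans _ _ (2%:R `^ (q ^ m)%:R)).
  apply: ler_powR; first by rewrite ler1n.
  by rewrite natrX -powR_mulrn ?ler0n // ler_powR // ler1n.
by rewrite powR_mulrn ?ler0n // -natrX ler_nat.
Qed.

Local Open Scope classical_set_scope.

Lemma squeeze_shifted_harmonic (R : realType) (u : nat -> R) (c : R) (J : nat) :
  (0 < J)%N -> (forall i, 0 <= u i <= c / (i + J)%:R) -> u i @[i --> \oo] --> 0.
Proof.
move=> J_gt0 u_bound; have c_ge0 : 0 <= c.
  have /andP[u0 uc] := u_bound 0%N; have := le_trans u0 uc.
  by rewrite pmulr_lge0 // invr_gt0 ltr0n add0n.
apply: (@squeeze_cvgr _ _ _ _ (fun=> 0) (fun i => c * harmonic i)).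
- apply: nearW => i; have /andP[-> u_le] := u_bound i; apply: le_trans u_le _.
  rewrite /= ler_wpM2l // lef_pV2 ?posrE ?ltr0n ?ler_nat ?addn_gt0 ?J_gt0 ?orbT //.
  by lia.
- exact: (@cvg_cst _ 0 _ _ _).
- rewrite -(mulr0 c); apply: (@cvgM _ _ _ _ (fun=> c) harmonic).
    exact: (@cvg_cst R^o c _ _ _).
  exact: cvg_harmonic.
Qed.

Theorem theorem3 (R : realType) (q : nat) (r : R) (l : nat) :
  (2 <= q)%N -> 0 < r -> r < 1 -> 2 / (1 - r) < l%:R ->
  exists (n : nat -> nat) (M : nat -> nat)
         (C : forall i : nat, detIDF q (n i) l (M i)),
    (forall B : nat, exists N : nat, forall i : nat, (N <= i)%N -> (B <= n i)%N) /\
    (forall i : nat,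
        (2%:R : R) `^ ((q%:R : R) `^ (r * l%:R * (n i)%:R)) <= (M i)%:R) /\
    (forall i : nat, lambda1 R (C i) = 0) /\
    (lambda2 R (C i) @[i --> \oo] --> 0%R).
Proof.
move=> q_gt1 r_gt0 r_lt1 l_large.
have [l_gt2 rate] := rate_slack r_gt0 r_lt1 l_large.
case: l {l_large} l_gt2 rate => [//|L] L_gt1 rate.
have L_gt0 : (0 < L)%N by lia.
pose J := (q * L + 4)%N.
pose code i := cid (orbit_code_exists R q_gt1 L_gt0 (leq_addl i J)).
exists (fun i => 2 ^ (i + J))%N, (fun i => projT1 (sval (code i))),
  (fun i => projT2 (sval (code i))).
split; [|split; [|split]].
- move=> B; exists B => i B_le_i; apply: leq_trans B_le_i _.
  exact: leq_trans (leq_addr J i) (ltnW (ltn_expl _ _)).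
- move=> i; have [M_large _ _] := svalP (code i).
  apply: powR_double_exp_le (ltnW q_gt1) _ M_large.
  rewrite natrM mulrC ler_pM2l ?ltr0n ?expn_gt0 //.
  by rewrite -subn1 -subSS.
- by move=> i; have [] := svalP (code i).
- apply: (@squeeze_shifted_harmonic _ _ 2 J) => [|i]; first by rewrite /J addn4.
  by have [_ _ lam2] := svalP (code i); rewrite lambda2_ge0.
Qed.
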